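(* Let $g(x)=\frac{\sin\log x}{\log x}$ for $0<x<1$ and $g(0)=g(1)=0$. If $\tfrac12<\sigma<1$, then $$\lim_{n\to\infty}\frac{S_{n,\sigma}(g)}{n^{2(1-\sigma)}}=\frac{1}{2(1-\sigma)}\arctan\Big(\frac{1}{1-\sigma}\Big),$$ and more precisely $$\frac{S_{n,\sigma}(g)}{n^{2(1-\sigma)}}=\frac{1}{2(1-\sigma)}\arctan\Big(\frac{1}{1-\sigma}\Big)+O_\sigma\Big(\frac{1}{n^{2(1-\sigma)/3}}\Big).$$
   Context: $S_{n,\sigma}(f)=\sum_{1\le k\le\ell\le n}\frac{1}{(k\ell)^\sigma}f\big(\frac k\ell\big)$. *)

From Stdlib Require Import Reals.
From Coquelicot Require Import Coquelicot.
Open Scope R_scope.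

(* g(x) = sin(log x)/log x for 0 < x < 1, and g(x) = 0 otherwise
   (in particular g(0) = g(1) = 0; only values on (0,1] are ever used). *)
Definition g (x : R) : R :=
  if Rlt_dec 0 x then (if Rlt_dec x 1 then sin (ln x) / ln x else 0) else 0.

Definition S_sum (n : nat) (sigma : R) (f : R -> R) : R :=
  sum_n_m (fun l : nat =>
    sum_n_m (fun k : nat =>
      Rpower (INR k * INR l) (- sigma) * f (INR k / INR l)) 1 l) 1 n.

From Stdlib Require Import Reals Lra Lia.
From Coquelicot Require Import Coquelicot.
Open Scope R_scope.

(* For 0 < x < 1, g(x) = ∫_0^1 cos(s log x) ds, so S_{n,σ}(g) = ∫_0^1 T_n(s) ds with
   2 T_n(s) = |Σ_{k≤n} k^{-σ-is}|^2 - Σ_{k≤n} k^{-2σ}.  Comparing the partial sum with an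
   antiderivative, Σ_{k≤n} k^{-σ-is} = n^{1-σ-is}/(1-σ-is) + O(1) uniformly in s ∈ [0,1], and
   Σ k^{-2σ} = O(1) since σ > 1/2; hence 2 T_n(s) = n^{2(1-σ)}/((1-σ)^2+s^2) + O(n^{1-σ}).
   Integrating over s, with ∫_0^1 ds/((1-σ)^2+s^2) = arctan(1/(1-σ))/(1-σ), gives the main term
   with relative error O(n^{-(1-σ)}), which is stronger than the claimed O(n^{-2(1-σ)/3}). *)

Lemma Rpower_base_1 (y : R) : Rpower 1 y = 1.
Proof. now unfold Rpower; rewrite ln_1, Rmult_0_r, exp_0. Qed.

Lemma Rpower_sub_1 (x a : R) : 0 < x -> Rpower x (a - 1) = Rpower x a / x.
Proof.
intros Hx. unfold Rminus, Rdiv.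
rewrite Rpower_plus, Rpower_Ropp, Rpower_1; auto.
Qed.

Lemma Rpower_le_nonpos (a b c : R) : c <= 0 -> 0 < a <= b -> Rpower b c <= Rpower a c.
Proof.
intros Hc Hab. unfold Rpower.
assert (ln a <= ln b) by (apply ln_le; lra).
assert (Hle : c * ln b <= c * ln a) by nra.
destruct (Rle_lt_or_eq_dec _ _ Hle) as [Hlt | ->]; [left; now apply exp_increasing | lra].
Qed.

Lemma Rpower_ge_1 (x c : R) : 1 <= x -> 0 <= c -> 1 <= Rpower x c.
Proof.
intros Hx Hc. rewrite <- (Rpower_O x) at 1 by lra. now apply Rle_Rpower.
Qed.

Lemma Rpower_le_pred_diff (p x : R) : 0 < p -> 1 < x ->
  Rpower x (- p - 1) <= (Rpower (x - 1) (- p) - Rpower x (- p)) / p.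
Proof.
intros Hp Hx.
destruct (MVT_cor2 (fun y => Rpower y (- p)) (fun y => - p * Rpower y (- p - 1)) (x - 1) x)
  as [c [Hmvt Hc]]; [lra | |].
- intros c Hc. apply derivable_pt_lim_power. lra.
- replace (x - (x - 1)) with 1 in Hmvt by ring.
  assert (Rpower x (- p - 1) <= Rpower c (- p - 1)) by (apply Rpower_le_nonpos; lra).
  apply Rmult_le_reg_l with p; [lra |].
  replace (p * ((Rpower (x - 1) (- p) - Rpower x (- p)) / p)) with
    (Rpower (x - 1) (- p) - Rpower x (- p)) by (field; lra).
  nra.
Qed.

Lemma sum_Rpower_opp_le (p : R) (n : nat) : 0 < p ->
  sum_n_m (fun k => Rpower (INR k) (- p - 1)) 1 n <= 1 + / p.
Proof.
intros Hp.
assert (Hinv : forall m, sum_n_m (fun k => Rpower (INR k) (- p - 1)) 1 (S m)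
                         + Rpower (INR (S m)) (- p) / p <= 1 + / p).
{ induction m as [|m IH].
  - rewrite sum_n_n. simpl INR. rewrite !Rpower_base_1. lra.
  - rewrite sum_n_Sm by lia. unfold plus; cbn -[INR sum_n_m].
    assert (H := Rpower_le_pred_diff p (INR (S (S m))) Hp).
    rewrite (S_INR (S m)) in H |- *. replace (INR (S m) + 1 - 1) with (INR (S m)) in H by ring.
    assert (0 < INR (S m)) by apply lt_0_INR, Nat.lt_0_succ.
    specialize (H ltac:(lra)). unfold Rdiv in *. lra. }
destruct n as [|m].
- rewrite sum_n_m_zero by lia. unfold zero; simpl.
  assert (0 < / p) by (apply Rinv_0_lt_compat; lra). lra.
- specialize (Hinv m).
  assert (0 <= Rpower (INR (S m)) (- p) / p)
    by (apply Rdiv_le_0_compat; [left; apply exp_pos | lra]).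
  lra.
Qed.

Lemma sum_n_m_Rpower_nonneg (a : R) (m n : nat) :
  0 <= sum_n_m (fun k => Rpower (INR k) a) m n.
Proof.
rewrite <- (Rmult_0_r (INR (S n - m))), <- (sum_n_m_const m n 0).
apply sum_n_m_le. intros k. left; apply exp_pos.
Qed.

Lemma Rabs_le_sum_increments (u w : nat -> R) :
  (forall k, (1 <= k)%nat -> Rabs (u (S k) - u k) <= w k) ->
  forall n, Rabs (u (S n)) <= Rabs (u 1%nat) + sum_n_m w 1 n.
Proof.
intros Hw n. induction n as [|n IH].
- rewrite sum_n_m_zero by lia. unfold zero; simpl. lra.
- rewrite sum_n_Sm by lia. unfold plus; simpl.
  specialize (Hw (S n) ltac:(lia)).
  replace (u (S (S n))) with (u (S n) + (u (S (S n)) - u (S n))) by ring.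
  eapply Rle_trans; [apply Rabs_triang | lra].
Qed.

(* Real and imaginary parts of x^(-σ-is) are osc σ s 0 x and -osc σ s (PI/2) x. *)
Definition osc (σ s φ x : R) : R := Rpower x (- σ) * cos (s * ln x - φ).

Definition osc_antideriv (σ s φ x : R) : R :=
  Rpower x (1 - σ) * ((1 - σ) * cos (s * ln x - φ) + s * sin (s * ln x - φ))
  / ((1 - σ) ^ 2 + s ^ 2).

Definition osc_sum (σ s φ : R) (n : nat) : R := sum_n_m (fun k => osc σ s φ (INR k)) 1 n.

Lemma is_derive_osc_antideriv (σ s φ x : R) : σ <> 1 -> 0 < x ->
  is_derive (osc_antideriv σ s φ) x (osc σ s φ x).
Proof.
intros Hσ Hx. unfold osc.
replace (- σ) with ((1 - σ) - 1) by ring. rewrite Rpower_sub_1 by exact Hx.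
assert (0 < (1 - σ) ^ 2 + s ^ 2) by (assert (1 - σ <> 0) by lra; nra).
unfold osc_antideriv, Rpower. auto_derive.
- intuition lra.
- unfold Rminus. field. split; [lra | nra].
Qed.

Lemma is_derive_osc (σ s φ x : R) : 0 < x ->
  is_derive (osc σ s φ) x
    (Rpower x (- σ - 1) * (- σ * cos (s * ln x - φ) - s * sin (s * ln x - φ))).
Proof.
intros Hx. rewrite Rpower_sub_1 by exact Hx.
unfold osc, Rpower. auto_derive.
- intuition lra.
- unfold Rminus. field. lra.
Qed.

Lemma osc_sum_S (σ s φ : R) (n : nat) :
  osc_sum σ s φ (S n) = osc_sum σ s φ n + osc σ s φ (INR (S n)).
Proof. unfold osc_sum. now rewrite sum_n_Sm by lia. Qed.

Section Oscillating_sum.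

Variables σ s φ : R.
Hypothesis Hσ : 0 < σ < 1.
Hypothesis Hs : 0 <= s <= 1.

Lemma Rabs_osc_antideriv_le (x : R) :
  Rabs (osc_antideriv σ s φ x) <= Rpower x (1 - σ) * ((2 - σ) / (1 - σ) ^ 2).
Proof.
unfold osc_antideriv.
set (Y := Rpower x (1 - σ)). set (c := cos (s * ln x - φ)). set (si := sin (s * ln x - φ)).
assert (HY : 0 < Y) by apply exp_pos.
assert (Hc : -1 <= c <= 1) by apply COS_bound.
assert (Hsi : -1 <= si <= 1) by apply SIN_bound.
assert (Hden : (1 - σ) ^ 2 <= (1 - σ) ^ 2 + s ^ 2) by nra.
assert (Hpos : 0 < (1 - σ) ^ 2) by nra.
assert (Hnum : Rabs ((1 - σ) * c + s * si) <= 2 - σ) by (apply Rabs_le; split; nra).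
unfold Rdiv. rewrite !Rabs_mult, Rabs_inv, (Rabs_right Y), (Rabs_right ((1 - σ) ^ 2 + s ^ 2)) by lra.
rewrite Rmult_assoc. apply Rmult_le_compat_l; [lra |].
apply Rmult_le_compat; [apply Rabs_pos | left; apply Rinv_0_lt_compat; lra | exact Hnum |].
apply Rinv_le_contravar; lra.
Qed.

Lemma Rabs_osc_sub_antideriv_diff_le (x : R) : 1 < x ->
  Rabs (osc σ s φ x - (osc_antideriv σ s φ x - osc_antideriv σ s φ (x - 1)))
  <= 2 * Rpower (x - 1) (- σ - 1).
Proof.
intros Hx.
destruct (MVT_cor2 (osc_antideriv σ s φ) (osc σ s φ) (x - 1) x) as [ξ [Hξ Hξx]]; [lra | |].
{ intros c Hc. apply is_derive_Reals, is_derive_osc_antideriv; lra. }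
destruct (MVT_cor2 (osc σ s φ) (fun y => Rpower y (- σ - 1)
            * (- σ * cos (s * ln y - φ) - s * sin (s * ln y - φ))) ξ x)
  as [η [Hη Hηx]]; [lra | |].
{ intros c Hc. apply is_derive_Reals, is_derive_osc; lra. }
replace (x - (x - 1)) with 1 in Hξ by ring.
rewrite Hξ, Rmult_1_r, Hη.
set (t := s * ln η - φ).
assert (Hpow : Rpower η (- σ - 1) <= Rpower (x - 1) (- σ - 1)) by (apply Rpower_le_nonpos; lra).
assert (Htrig : Rabs (- σ * cos t - s * sin t) <= 2).
{ pose proof (COS_bound t). pose proof (SIN_bound t). apply Rabs_le; split; nra. }
assert (0 < Rpower η (- σ - 1)) by apply exp_pos.
rewrite !Rabs_mult, (Rabs_right (Rpower _ _)), (Rabs_right (x - ξ)) by lra.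
pose proof (Rabs_pos (- σ * cos t - s * sin t)).
apply Rle_trans with (Rpower (x - 1) (- σ - 1) * 2 * 1); [| lra].
apply Rmult_le_compat; [nra | lra | apply Rmult_le_compat | ]; lra.
Qed.

Lemma Rabs_osc_sum_sub_antideriv_le (n : nat) : (1 <= n)%nat ->
  Rabs (osc_sum σ s φ n - osc_antideriv σ s φ (INR n))
  <= 1 + (2 - σ) / (1 - σ) ^ 2 + 2 * (1 + / σ).
Proof.
intros Hn.
set (u m := osc_sum σ s φ m - osc_antideriv σ s φ (INR m)).
assert (Hstep : forall k, (1 <= k)%nat -> Rabs (u (S k) - u k) <= 2 * Rpower (INR k) (- σ - 1)).
{ intros k Hk. unfold u. rewrite osc_sum_S.
  assert (H := Rabs_osc_sub_antideriv_diff_le (INR (S k))).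
  rewrite S_INR in H |- *. replace (INR k + 1 - 1) with (INR k) in H by ring.
  assert (1 <= INR k) by (apply (le_INR 1); exact Hk).
  replace (_ - _) with (osc σ s φ (INR k + 1) - (osc_antideriv σ s φ (INR k + 1)
     - osc_antideriv σ s φ (INR k))) by ring.
  apply H. lra. }
assert (Hu1 : Rabs (u 1%nat) <= 1 + (2 - σ) / (1 - σ) ^ 2).
{ unfold u, osc_sum. rewrite sum_n_n.
  assert (H := Rabs_osc_antideriv_le 1). rewrite Rpower_base_1, Rmult_1_l in H.
  unfold osc. simpl INR. rewrite Rpower_base_1, Rmult_1_l.
  assert (Rabs (cos (s * ln 1 - φ)) <= 1) by (apply Rabs_le, COS_bound).
  eapply Rle_trans; [apply Rabs_triang | rewrite Rabs_Ropp; lra]. }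
destruct n as [|m]; [lia |].
eapply Rle_trans; [apply (Rabs_le_sum_increments u _ Hstep) |].
replace (sum_n_m _ 1 m) with (2 * sum_n_m (fun k => Rpower (INR k) (- σ - 1)) 1 m)
  by (symmetry; exact (sum_n_m_mult_l (K := R_AbsRing) 2 _ 1 m)).
pose proof (sum_Rpower_opp_le σ m (proj1 Hσ)).
lra.
Qed.

End Oscillating_sum.

Lemma S_sum_S (n : nat) (σ : R) (f : R -> R) :
  S_sum (S n) σ f
  = S_sum n σ f + sum_n_m (fun k => Rpower (INR k * INR (S n)) (- σ) * f (INR k / INR (S n))) 1 (S n).
Proof. unfold S_sum. now rewrite sum_n_Sm by lia. Qed.

(* g x = ∫_0^1 cos_log_kernel s x ds for every x; the diagonal k = l of S_sum contributes 0. *)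
Definition cos_log_kernel (s x : R) : R :=
  if Rlt_dec 0 x then (if Rlt_dec x 1 then cos (s * ln x) else 0) else 0.

Section Kernel_sum.

Variables σ s : R.

Lemma osc_0 (x : R) : osc σ s 0 x = Rpower x (- σ) * cos (s * ln x).
Proof. unfold osc. now rewrite Rminus_0_r. Qed.

Lemma osc_PI2 (x : R) : osc σ s (PI / 2) x = Rpower x (- σ) * sin (s * ln x).
Proof. unfold osc. rewrite cos_minus, cos_PI2, sin_PI2. ring. Qed.

Lemma osc_mul_add (x y : R) : 0 < x -> 0 < y ->
  Rpower (x * y) (- σ) * cos (s * ln (x / y))
  = osc σ s 0 y * osc σ s 0 x + osc σ s (PI / 2) y * osc σ s (PI / 2) x.
Proof.
intros Hx Hy. rewrite !osc_0, !osc_PI2, <- Rpower_mult_distr, ln_div by assumption.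
replace (s * (ln x - ln y)) with (s * ln x - s * ln y) by ring.
rewrite cos_minus. ring.
Qed.

Lemma osc_sq_add (x : R) : osc σ s 0 x ^ 2 + osc σ s (PI / 2) x ^ 2 = Rpower x (- 2 * σ).
Proof.
rewrite osc_0, osc_PI2.
replace (- 2 * σ) with (- σ + - σ) by ring. rewrite Rpower_plus.
pose proof (sin2_cos2 (s * ln x)) as Hpyth. unfold Rsqr in Hpyth.
replace (Rpower x (- σ) * Rpower x (- σ))
  with (Rpower x (- σ) * Rpower x (- σ) * (sin (s * ln x) * sin (s * ln x)
        + cos (s * ln x) * cos (s * ln x))) by (rewrite Hpyth; ring).
ring.
Qed.

Lemma sum_cos_log_kernel_row (n : nat) :
  sum_n_m (fun k => Rpower (INR k * INR (S n)) (- σ) * cos_log_kernel s (INR k / INR (S n))) 1 (S n)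
  = osc σ s 0 (INR (S n)) * osc_sum σ s 0 n + osc σ s (PI / 2) (INR (S n)) * osc_sum σ s (PI / 2) n.
Proof.
assert (Hl : 0 < INR (S n)) by apply lt_0_INR, Nat.lt_0_succ.
rewrite sum_n_Sm by lia. unfold plus; cbn -[INR sum_n_m].
unfold cos_log_kernel at 2. rewrite Rdiv_diag by lra.
destruct (Rlt_dec 0 1); [| lra]. destruct (Rlt_dec 1 1); [lra |].
rewrite Rmult_0_r, Rplus_0_r. unfold osc_sum.
transitivity (sum_n_m (fun k => plus (mult (osc σ s 0 (INR (S n))) (osc σ s 0 (INR k)))
  (mult (osc σ s (PI / 2) (INR (S n))) (osc σ s (PI / 2) (INR k)))) 1 n).
2: { now rewrite sum_n_m_plus, !sum_n_m_mult_l. }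
apply sum_n_m_ext_loc. intros k Hk.
assert (Hk0 : 0 < INR k) by (apply lt_0_INR; lia).
assert (Hkl : INR k < INR (S n)) by (apply lt_INR; lia).
assert (Hq : 0 < INR k / INR (S n) < 1).
{ split; [now apply Rdiv_lt_0_compat |]. apply (proj1 (Rdiv_lt_1 _ _ Hl) Hkl). }
unfold cos_log_kernel.
destruct (Rlt_dec 0 (INR k / INR (S n))); [| lra].
destruct (Rlt_dec (INR k / INR (S n)) 1); [| lra].
now apply osc_mul_add.
Qed.

Lemma two_S_sum_cos_log_kernel (n : nat) :
  2 * S_sum n σ (cos_log_kernel s)
  = osc_sum σ s 0 n ^ 2 + osc_sum σ s (PI / 2) n ^ 2
    - sum_n_m (fun k => Rpower (INR k) (- 2 * σ)) 1 n.
Proof.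
induction n as [|n IH].
- unfold S_sum, osc_sum. rewrite !sum_n_m_zero by lia. unfold zero; simpl. ring.
- rewrite S_sum_S, !osc_sum_S, sum_cos_log_kernel_row, sum_n_Sm by lia.
  unfold plus; cbn -[INR sum_n_m].
  rewrite Rmult_plus_distr_l, IH, <- osc_sq_add. ring.
Qed.

End Kernel_sum.

Lemma is_RInt_0 (a b : R) : is_RInt (fun _ => 0) a b 0.
Proof.
assert (H := is_RInt_const (V := R_NormedModule) a b 0).
unfold scal in H; simpl in H; unfold mult in H; simpl in H.
now rewrite Rmult_0_r in H.
Qed.

Lemma is_RInt_sum_n_m (f : nat -> R -> R) (v : nat -> R) (a b : R) (m n : nat) :
  (forall i, is_RInt (f i) a b (v i)) ->
  is_RInt (fun x => sum_n_m (fun i => f i x) m n) a b (sum_n_m v m n).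
Proof.
intros Hf. induction n as [|n IH].
- destruct m as [|m].
  + rewrite sum_n_n. apply (is_RInt_ext (f 0%nat)); [intros; now rewrite sum_n_n | apply Hf].
  + rewrite sum_n_m_zero by lia.
    apply (is_RInt_ext (fun _ => 0)); [intros; now rewrite sum_n_m_zero by lia | apply is_RInt_0].
- destruct (Compare_dec.le_lt_dec m (S n)) as [Hle | Hlt].
  + rewrite sum_n_Sm by exact Hle.
    apply (is_RInt_ext (fun x => plus (sum_n_m (fun i => f i x) m n) (f (S n) x))).
    * intros. now rewrite sum_n_Sm by exact Hle.
    * now apply (is_RInt_plus (V := R_NormedModule)).
  + rewrite sum_n_m_zero by exact Hlt.
    apply (is_RInt_ext (fun _ => 0)); [intros; now rewrite sum_n_m_zero by exact Hlt | apply is_RInt_0].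
Qed.

Lemma is_RInt_S_sum (F : R -> R -> R) (f : R -> R) (a b σ : R) (n : nat) :
  (forall x, is_RInt (fun s => F s x) a b (f x)) ->
  is_RInt (fun s => S_sum n σ (F s)) a b (S_sum n σ f).
Proof.
intros HF. unfold S_sum.
apply is_RInt_sum_n_m. intros l. apply is_RInt_sum_n_m. intros k.
apply (is_RInt_scal (fun s => F s (INR k / INR l))), HF.
Qed.

Lemma is_RInt_cos_mul (L : R) : L <> 0 -> is_RInt (fun s => cos (s * L)) 0 1 (sin L / L).
Proof.
intros HL.
replace (sin L / L) with (minus (sin (1 * L) / L) (sin (0 * L) / L))
  by (unfold minus, plus, opp; simpl; rewrite Rmult_0_l, sin_0, Rmult_1_l; field; exact HL).
apply (is_RInt_derive (V := R_CompleteNormedModule) (fun s => sin (s * L) / L)).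
- intros s _. auto_derive; [easy | field; exact HL].
- intros s _. apply (ex_derive_continuous (K := R_AbsRing) (V := R_NormedModule)). auto_derive. easy.
Qed.

Lemma is_RInt_cos_log_kernel (x : R) : is_RInt (fun s => cos_log_kernel s x) 0 1 (g x).
Proof.
unfold cos_log_kernel, g.
destruct (Rlt_dec 0 x) as [Hx0 |]; [destruct (Rlt_dec x 1) as [Hx1 |] |].
- apply is_RInt_cos_mul.
  assert (ln x < 0) by (rewrite <- ln_1; now apply ln_increasing). lra.
- apply is_RInt_0.
- apply is_RInt_0.
Qed.

Lemma is_RInt_inv_sq_add (a : R) : 0 < a ->
  is_RInt (fun s => / (a ^ 2 + s ^ 2)) 0 1 (atan (1 / a) / a).
Proof.
intros Ha.
replace (atan (1 / a) / a) with (minus (atan (1 / a) / a) (atan (0 / a) / a))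
  by (unfold minus, plus, opp; simpl; unfold Rdiv; rewrite Rmult_0_l, atan_0; ring).
apply (is_RInt_derive (V := R_CompleteNormedModule) (fun s => atan (s / a) / a)).
- intros s _.
  assert (Hatan : is_derive (fun s => atan (s / a)) s (/ a * / (1 + (s / a) ^ 2))).
  { apply (is_derive_comp (K := R_AbsRing) (V := R_NormedModule) atan (fun s => s / a)).
    - apply is_derive_Reals, derivable_pt_lim_atan.
    - auto_derive; [easy | field; lra]. }
  apply (is_derive_ext (fun s => / a * atan (s / a))); [intros; simpl; unfold Rdiv; ring |].
  replace (/ (a ^ 2 + s ^ 2)) with (scal (/ a) (/ a * / (1 + (s / a) ^ 2)))
    by (unfold scal; simpl; unfold mult; simpl; field; split; [nra | lra]).
  now apply is_derive_scal.
- intros s _. apply (ex_derive_continuous (K := R_AbsRing) (V := R_NormedModule)).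
  auto_derive. nra.
Qed.

Lemma osc_antideriv_sq_add (σ s x : R) : σ <> 1 ->
  osc_antideriv σ s 0 x ^ 2 + osc_antideriv σ s (PI / 2) x ^ 2
  = Rpower x (2 * (1 - σ)) / ((1 - σ) ^ 2 + s ^ 2).
Proof.
intros Hσ. unfold osc_antideriv.
rewrite Rminus_0_r, cos_minus, sin_minus, cos_PI2, sin_PI2.
replace (2 * (1 - σ)) with ((1 - σ) + (1 - σ)) by ring. rewrite Rpower_plus.
assert (0 < (1 - σ) ^ 2 + s ^ 2) by (assert (1 - σ <> 0) by lra; nra).
pose proof (sin2_cos2 (s * ln x)) as Hpyth. unfold Rsqr in Hpyth.
set (c := cos (s * ln x)) in *. set (si := sin (s * ln x)) in *.
transitivity (Rpower x (1 - σ) * Rpower x (1 - σ) * ((1 - σ) ^ 2 + s ^ 2) * (si * si + c * c)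
              / ((1 - σ) ^ 2 + s ^ 2) ^ 2); [field; lra |].
rewrite Hpyth. field. lra.
Qed.

Lemma sq_add_perturbation (c0 c1 q0 q1 d K B D Y : R) :
  Rabs (c0 - q0) <= K -> Rabs (c1 - q1) <= K ->
  Rabs q0 <= B * Y -> Rabs q1 <= B * Y -> 0 <= d <= D -> 1 <= Y ->
  Rabs (c0 ^ 2 + c1 ^ 2 - d - (q0 ^ 2 + q1 ^ 2)) <= (4 * B * K + 2 * K ^ 2 + D) * Y.
Proof.
intros H0 H1 Hq0 Hq1 Hd HY.
assert (HK : 0 <= K) by (pose proof (Rabs_pos (c0 - q0)); lra).
assert (HB : 0 <= B * Y) by (pose proof (Rabs_pos q0); lra).
assert (Hsq : forall c q, Rabs (c - q) <= K -> Rabs q <= B * Y ->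
          Rabs (c ^ 2 - q ^ 2) <= 2 * (B * Y) * K + K ^ 2).
{ intros c q Hc Hq.
  replace (c ^ 2 - q ^ 2) with (2 * q * (c - q) + (c - q) ^ 2) by ring.
  assert (Hprod : Rabs q * Rabs (c - q) <= B * Y * K)
    by (apply Rmult_le_compat; auto using Rabs_pos).
  assert (Hsq : Rabs (c - q) ^ 2 <= K ^ 2)
    by (apply pow_incr; split; [apply Rabs_pos | exact Hc]).
  eapply Rle_trans; [apply Rabs_triang |].
  rewrite !Rabs_mult, <- RPow_abs, (Rabs_right 2) by lra.
  lra. }
specialize (Hsq c0 q0 H0 Hq0) as Hsq0. specialize (Hsq c1 q1 H1 Hq1) as Hsq1.
replace (c0 ^ 2 + c1 ^ 2 - d - (q0 ^ 2 + q1 ^ 2)) with ((c0 ^ 2 - q0 ^ 2) + (c1 ^ 2 - q1 ^ 2) - d)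
  by ring.
apply Rabs_le. apply Rabs_le_between in Hsq0, Hsq1.
assert (K ^ 2 <= K ^ 2 * Y) by nra.
assert (D <= D * Y) by nra.
split; nra.
Qed.

Lemma two_S_sum_cos_log_kernel_asymptotic (σ : R) : 1 / 2 < σ < 1 ->
  exists K, forall (s : R) (n : nat), 0 <= s <= 1 -> (1 <= n)%nat ->
    Rabs (2 * S_sum n σ (cos_log_kernel s) - Rpower (INR n) (2 * (1 - σ)) / ((1 - σ) ^ 2 + s ^ 2))
    <= K * Rpower (INR n) (1 - σ).
Proof.
intros Hσ.
exists (4 * ((2 - σ) / (1 - σ) ^ 2) * (1 + (2 - σ) / (1 - σ) ^ 2 + 2 * (1 + / σ))
        + 2 * (1 + (2 - σ) / (1 - σ) ^ 2 + 2 * (1 + / σ)) ^ 2 + (1 + / (2 * σ - 1))).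
intros s n Hs Hn.
assert (Hσ' : 0 < σ < 1) by lra.
rewrite two_S_sum_cos_log_kernel, <- osc_antideriv_sq_add by lra.
apply sq_add_perturbation.
- now apply Rabs_osc_sum_sub_antideriv_le.
- now apply Rabs_osc_sum_sub_antideriv_le.
- rewrite Rmult_comm. now apply Rabs_osc_antideriv_le.
- rewrite Rmult_comm. now apply Rabs_osc_antideriv_le.
- replace (- 2 * σ) with (- (2 * σ - 1) - 1) by ring.
  split; [apply sum_n_m_Rpower_nonneg | apply sum_Rpower_opp_le; lra].
- apply Rpower_ge_1; [apply (le_INR 1); exact Hn | lra].
Qed.

Lemma S_sum_g_asymptotic (σ : R) : 1 / 2 < σ < 1 ->
  exists K, forall n : nat, (1 <= n)%nat ->
    Rabs (S_sum n σ g - Rpower (INR n) (2 * (1 - σ)) * (atan (1 / (1 - σ)) / (2 * (1 - σ))))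
    <= K * Rpower (INR n) (1 - σ).
Proof.
intros Hσ.
destruct (two_S_sum_cos_log_kernel_asymptotic σ Hσ) as [K HK].
exists (K / 2). intros n Hn.
set (M := Rpower (INR n) (2 * (1 - σ))).
assert (Hint := is_RInt_minus (V := R_NormedModule) _ _ 0 1 _ _
  (is_RInt_S_sum cos_log_kernel g 0 1 σ n is_RInt_cos_log_kernel)
  (is_RInt_scal _ _ _ (M / 2) _ (is_RInt_inv_sq_add (1 - σ) ltac:(lra)))).
assert (Hbound : forall s, 0 <= s <= 1 ->
  Rabs (S_sum n σ (cos_log_kernel s) - M / 2 * / ((1 - σ) ^ 2 + s ^ 2))
  <= K * Rpower (INR n) (1 - σ) / 2).
{ intros s Hs.
  replace (S_sum n σ (cos_log_kernel s) - M / 2 * / ((1 - σ) ^ 2 + s ^ 2))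
    with ((2 * S_sum n σ (cos_log_kernel s) - M / ((1 - σ) ^ 2 + s ^ 2)) / 2)
    by (field; nra).
  unfold Rdiv at 1. rewrite Rabs_mult, (Rabs_right (/ 2)) by lra.
  specialize (HK s n Hs Hn). fold M in HK. lra. }
assert (Hle := norm_RInt_le_const (V := R_NormedModule) _ 0 1 _ _ Rle_0_1 Hbound Hint).
unfold norm, minus, plus, opp, scal in Hle; simpl in Hle; unfold mult, abs in Hle; simpl in Hle.
replace (M * (atan (1 / (1 - σ)) / (2 * (1 - σ))))
  with (M / 2 * (atan (1 / (1 - σ)) / (1 - σ))) by (field; lra).
replace (K / 2 * Rpower (INR n) (1 - σ)) with ((1 - 0) * (K * Rpower (INR n) (1 - σ) / 2))
  by field.
exact Hle.
Qed.

Lemma S_sum_g_normalized_error (σ : R) : 1 / 2 < σ < 1 ->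
  exists C, forall n : nat, (1 <= n)%nat ->
    Rabs (S_sum n σ g / Rpower (INR n) (2 * (1 - σ))
          - 1 / (2 * (1 - σ)) * atan (1 / (1 - σ)))
    <= C / Rpower (INR n) (2 * (1 - σ) / 3).
Proof.
intros Hσ. destruct (S_sum_g_asymptotic σ Hσ) as [K HK].
exists K. intros n Hn. specialize (HK n Hn).
set (Y := Rpower (INR n) (1 - σ)) in HK.
assert (HM : Rpower (INR n) (2 * (1 - σ)) = Y * Y)
  by (unfold Y; rewrite <- Rpower_plus; f_equal; ring).
assert (H1n : 1 <= INR n) by (apply (le_INR 1); exact Hn).
assert (HY : 1 <= Y) by (apply Rpower_ge_1; lra).
assert (HZ : 0 < Rpower (INR n) (2 * (1 - σ) / 3)) by apply exp_pos.
assert (HZY : Rpower (INR n) (2 * (1 - σ) / 3) <= Y) by (apply Rle_Rpower; lra).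
rewrite HM in HK |- *.
assert (HK0 : 0 <= K).
{ apply (Rmult_le_reg_r Y); [lra |]. rewrite Rmult_0_l.
  eapply Rle_trans; [apply Rabs_pos | exact HK]. }
replace (S_sum n σ g / (Y * Y) - 1 / (2 * (1 - σ)) * atan (1 / (1 - σ)))
  with ((S_sum n σ g - Y * Y * (atan (1 / (1 - σ)) / (2 * (1 - σ)))) / (Y * Y))
  by (field; lra).
unfold Rdiv at 1. rewrite Rabs_mult, Rabs_inv, (Rabs_right (Y * Y)) by nra.
apply Rle_trans with (K * Y / (Y * Y)).
- apply Rmult_le_compat_r; [left; apply Rinv_0_lt_compat; nra | exact HK].
- replace (K * Y / (Y * Y)) with (K / Y) by (field; lra).
  apply Rmult_le_compat_l; [exact HK0 |]. apply Rinv_le_contravar; lra.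
Qed.

Lemma is_lim_seq_div_Rpower_INR (C b : R) : 0 < b ->
  is_lim_seq (fun n => C / Rpower (INR n) b) 0.
Proof.
intros Hb.
assert (Hln : is_lim_seq (fun n => ln (INR n)) p_infty).
{ apply (is_lim_comp_seq ln INR p_infty p_infty is_lim_ln_p); [| apply is_lim_seq_INR].
  now exists 0%nat. }
apply (is_lim_seq_scal_l _ b) in Hln.
assert (Hpow : is_lim_seq (fun n => Rpower (INR n) b) p_infty).
{ apply (is_lim_comp_seq exp _ p_infty p_infty is_lim_exp_p); [now exists 0%nat |].
  replace p_infty with (Rbar_mult b p_infty); [exact Hln |].
  simpl. destruct (Rle_dec 0 b) as [Hb' |]; [| lra].
  destruct (Rle_lt_or_eq_dec 0 b Hb'); [easy | lra]. }
apply is_lim_seq_inv in Hpow; [| discriminate].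
apply (is_lim_seq_scal_l _ C) in Hpow. simpl in Hpow. rewrite Rmult_0_r in Hpow.
exact Hpow.
Qed.

Lemma is_lim_seq_of_Rabs_sub_le (u v : nat -> R) (l : R) :
  eventually (fun n => Rabs (u n - l) <= v n) -> is_lim_seq v 0 -> is_lim_seq u l.
Proof.
intros Hle Hv.
apply (is_lim_seq_ext (fun n => (u n - l) + l)); [intros; ring |].
replace (Finite l) with (Rbar_plus 0 l) by (simpl; now rewrite Rplus_0_l).
apply is_lim_seq_plus'; [| apply is_lim_seq_const].
apply is_lim_seq_abs_0, (is_lim_seq_le_le_loc (fun _ => 0) _ v); [| apply is_lim_seq_const | exact Hv].
destruct Hle as [N HN]. exists N. intros n Hn. split; [apply Rabs_pos | now apply HN].
Qed.

Theorem theorem5p4 (sigma : R) (Hs1 : 1/2 < sigma) (Hs2 : sigma < 1) :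
  is_lim_seq (fun n : nat => S_sum n sigma g / Rpower (INR n) (2 * (1 - sigma)))
    (1 / (2 * (1 - sigma)) * atan (1 / (1 - sigma)))
  /\
  exists C : R, exists N : nat, forall n : nat, (N <= n)%nat ->
    Rabs (S_sum n sigma g / Rpower (INR n) (2 * (1 - sigma))
          - 1 / (2 * (1 - sigma)) * atan (1 / (1 - sigma)))
    <= C / Rpower (INR n) (2 * (1 - sigma) / 3).
Proof.
destruct (S_sum_g_normalized_error sigma (conj Hs1 Hs2)) as [C HC].
split.
- apply (is_lim_seq_of_Rabs_sub_le _ (fun n => C / Rpower (INR n) (2 * (1 - sigma) / 3))).
  + exists 1%nat. exact HC.
  + apply is_lim_seq_div_Rpower_INR. lra.
- now exists C, 1%nat.
Qed.
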